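(* If $G$ is the $3\times 3$, $3\times 5$, or $4\times 4$ square lattice graph $P_m\times P_n$, then $T_1(G)=3$.
   Context: $P_m\times P_n$ is the Cartesian product of paths on $m$ and $n$ vertices (the $m\times n$ square lattice graph). Fix a set $\Sigma$ of symbols (bond-edge types) and a disjoint copy $\hat\Sigma=\{\hat a:a\in\Sigma\}$ with $\hat{\hat a}=a$; elements of $\Sigma\cup\hat\Sigma$ are cohesive-end types. A tile is a finite multiset of cohesive-end types. A pot is a finite set $P$ of tiles such that whenever $x$ occurs in a tile of $P$, $\hat x$ occurs in some tile of $P$; $\#P$ is its number of tiles. Graphs are finite, loops and multiple edges allowed. An assembly design of a graph $H$ labels the half-edges of $H$ by cohesive-end types so that the two half-edges of each edge receive complementary labels $x,\hat x$; $t_v$ is the multiset of labels at $v$, $P_\lambda(H)=\{t_v\}$, and $P$ realizes $H$ ($H\in\mathcal{O}(P)$) if some assembly design $\lambda$ has $P_\lambda(H)\subseteq P$. $T_1(G)=\min\{\#P: G\in\mathcal{O}(P)\}$. *)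

From mathcomp Require Import all_boot.
From mathcomp Require Import finmap multiset.

Set Implicit Arguments.
Unset Strict Implicit.
Unset Printing Implicit Defensive.

Local Open Scope fset_scope.

(* Bond-edge types Sigma := nat (an unlimited supply of symbols);
   cohesive-end types are Sigma + hat(Sigma), encoded as (a, false) = a and
   (a, true) = hat a. *)
Definition cet := (nat * bool)%type.
Definition hat (x : cet) : cet := (x.1, ~~ x.2).

Definition tile := {mset cet}%mset.

Definition is_pot (P : {fset tile}) : Prop :=
  forall (t : tile) (x : cet), t \in P -> x \in t ->
    exists2 t' : tile, t' \in P & hat x \in t'.

(* Finite simple graphs: a finType of vertices with a symmetric irreflexive
   adjacency relation.  A half-edge at v of the edge {v,w} is the ordered pair
   (v,w) with adj v w. *)
Definition simple_graph (V : finType) (adj : rel V) : Prop :=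
  irreflexive adj /\ symmetric adj.

Definition assembly_design (V : finType) (adj : rel V) (lam : V -> V -> cet)
  : Prop := forall v w, adj v w -> lam w v = hat (lam v w).

Definition tile_at (V : finType) (adj : rel V) (lam : V -> V -> cet) (v : V)
  : tile := seq_mset [seq lam v w | w <- enum V & adj v w].

Definition realizes (P : {fset tile}) (V : finType) (adj : rel V) : Prop :=
  exists lam : V -> V -> cet,
    assembly_design adj lam /\ forall v : V, tile_at adj lam v \in P.

Definition T1_eq (V : finType) (adj : rel V) (k : nat) : Prop :=
  (exists P : {fset tile}, [/\ is_pot P, realizes P adj & #|` P| = k]) /\
  (forall P : {fset tile}, is_pot P -> realizes P adj -> k <= #|` P|).

Definition grid_adj (m n : nat) : rel ('I_m * 'I_n) :=
  fun u v =>
    ((u.1 == v.1 :> nat) && ((u.2.+1 == v.2 :> nat) || (v.2.+1 == u.2 :> nat)))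
 || ((u.2 == v.2 :> nat) && ((u.1.+1 == v.1 :> nat) || (v.1.+1 == u.1 :> nat))).
Arguments grid_adj : clear implicits.

(* A tile has as many cohesive ends as its vertex has edges, so a pot realizing
   a graph whose vertex degrees take three values has at least three tiles;
   in a grid with at least three rows and columns the corners, side vertices
   and inner vertices have degrees 2, 3 and 4.  Conversely, with a single
   bond-edge type [a] an assembly design is an orientation (label [a] at the
   tail, [hat a] at the head), and its tiles are determined by the in- and
   out-degrees.  Orienting both edges out of each corner, one edge out of each
   side vertex, and no edge (3 x 3) or two edges (3 x 5, 4 x 4) out of each
   inner vertex uses only three tiles. *)

From mathcomp Require Import all_boot.
From mathcomp Require Import finmap multiset.

Set Implicit Arguments.
Unset Strict Implicit.
Unset Printing Implicit Defensive.

Local Open Scope fset_scope.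

Lemma mem_seq_mset (K : choiceType) (s : seq K) (x : K) :
  (x \in seq_mset s) = (x \in s).
Proof. exact: perm_mem (perm_eq_seq_mset s) x. Qed.

Definition pot_of (ss : seq (seq cet)) : {fset tile} :=
  [fset seq_mset s | s in ss].

Lemma card_pot_of (ss : seq (seq cet)) : #|` pot_of ss| <= size ss.
Proof.
apply: leq_trans (leq_imfset_card _ _ _) _.
by apply: uniq_leq_size (enum_finmem_uniq _) _ => s; rewrite enum_finmemE.
Qed.

Lemma is_pot_of (ss : seq (seq cet)) :
  all (fun x => has (fun s => hat x \in s) ss) (flatten ss) ->
  is_pot (pot_of ss).
Proof.
move=> /allP hat_closed t x /imfsetP [s s_ss ->]; rewrite mem_seq_mset => xs.
have /hat_closed/hasP [s' s'_ss hat_x] : x \in flatten ss.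
  by apply/flattenP; exists s.
by exists (seq_mset s'); [apply: in_imfset | rewrite mem_seq_mset].
Qed.

Lemma card_count (T : finType) (A : pred T) : #|A| = count A (enum T).
Proof. by rewrite cardE -size_filter [in RHS]enumT. Qed.

Section Realizations.

Variables (V : finType) (adj : rel V).

Lemma size_tile_at (lam : V -> V -> cet) (v : V) :
  size (enum_mset (tile_at adj lam v)) = #|adj v|.
Proof.
by rewrite (perm_size (perm_eq_seq_mset _)) size_map size_filter card_count.
Qed.

Lemma realizes_card_ge (P : {fset tile}) (vs : seq V) :
  realizes P adj -> uniq [seq #|adj v| | v <- vs] -> size vs <= #|` P|.
Proof.
move=> [lam [_ lamP]] uniq_deg.
have uniq_tiles : uniq [seq tile_at adj lam v | v <- vs].
  apply: (@map_uniq _ _ (fun t : tile => size (enum_mset t))).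
  by rewrite -map_comp (eq_map (size_tile_at lam)).
rewrite -(size_map (tile_at adj lam)).
by apply: uniq_leq_size uniq_tiles _ => _ /mapP [v _ ->]; apply: lamP.
Qed.

Lemma assembly_designP (lam : V -> V -> cet) :
  reflect (assembly_design adj lam)
    (all (fun v =>
            all (fun w => adj v w ==> (lam w v == hat (lam v w))) (enum V))
       (enum V)).
Proof.
apply: (iffP allP) => [design v w vw | design v _].
  have /allP/(_ w (mem_enum _ w)) := design v (mem_enum _ v).
  by rewrite vw => /eqP.
by apply/allP => w _; apply/implyP => /design ->.
Qed.

Lemma realizes_pot_of (ss : seq (seq cet)) (lam : V -> V -> cet) :
  assembly_design adj lam ->
  (forall v, has (perm_eq [seq lam v w | w <- enum V & adj v w]) ss) ->
  realizes (pot_of ss) adj.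
Proof.
move=> design tiled; exists lam; split=> // v.
have /hasP [s s_ss /eq_seq_msetP tile_v] := tiled v.
by rewrite /tile_at tile_v; apply: in_imfset.
Qed.

Lemma T1_eq_of_design (k : nat) (ss : seq (seq cet)) (lam : V -> V -> cet)
    (vs : seq V) :
  size ss = k -> size vs = k -> uniq [seq #|adj v| | v <- vs] ->
  all (fun x => has (fun s => hat x \in s) ss) (flatten ss) ->
  assembly_design adj lam ->
  (forall v, has (perm_eq [seq lam v w | w <- enum V & adj v w]) ss) ->
  T1_eq adj k.
Proof.
move=> size_ss size_vs uniq_deg hat_closed design tiled.
have realized := realizes_pot_of design tiled.
split=> [|P _ realizedP]; last by rewrite -size_vs; apply: realizes_card_ge.
exists (pot_of ss); split; [exact: is_pot_of | exact: realized |].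
apply/eqP; rewrite eqn_leq -{1}size_ss card_pot_of -{1}size_vs.
exact: realizes_card_ge realized uniq_deg.
Qed.

End Realizations.

Lemma enum_prodE (T1 T2 : finType) :
  enum {: T1 * T2} = [seq (x1, x2) | x1 <- enum T1, x2 <- enum T2].
Proof. by rewrite [in LHS]enumT [in LHS]unlock. Qed.

(* [enum 'I_n] is stuck under [vm_compute] on the opaque proof [idP] inside
   [insub]; [ord_seq n] is the same list built without it. *)
Fixpoint ord_seq (n : nat) : seq 'I_n :=
  if n is n'.+1 then ord0 :: map (lift ord0) (ord_seq n') else [::].

Lemma enum_ordE (n : nat) : enum 'I_n = ord_seq n.
Proof.
elim: n => [|n IHn]; first by apply: size0nil; rewrite size_enum_ord.
by rewrite enum_ordSl IHn.
Qed.

Definition grid_vertices (m n : nat) : seq ('I_m * 'I_n) :=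
  [seq (i, j) | i <- ord_seq m, j <- ord_seq n].

Lemma grid_verticesE (m n : nat) : grid_vertices m n = enum {: 'I_m * 'I_n}.
Proof. by rewrite enum_prodE !enum_ordE. Qed.

(* (0,0), (0,1) and (1,1): a corner, a side and an inner vertex. *)
Definition grid_witnesses (m n : nat) : seq ('I_m.+2 * 'I_n.+2) :=
  [:: (ord0, ord0); (ord0, lift ord0 ord0); (lift ord0 ord0, lift ord0 ord0)].

Definition bond : cet := (0, false).

Definition arc_label (m n : nat) (arcs : seq ((nat * nat) * (nat * nat)))
    (v w : 'I_m * 'I_n) : cet :=
  if ((v.1 : nat, v.2 : nat), (w.1 : nat, w.2 : nat)) \in arcs then bond
  else hat bond.

Lemma grid_T1_eq3 (m n : nat) (arcs : seq ((nat * nat) * (nat * nat)))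
    (ss : seq (seq cet)) (vs := grid_vertices m.+2 n.+2)
    (adj := grid_adj m.+2 n.+2)
    (lam := arc_label (m := m.+2) (n := n.+2) arcs) :
  size ss = 3 ->
  uniq [seq count (adj v) vs | v <- grid_witnesses m n] ->
  all (fun x => has (fun s => hat x \in s) ss) (flatten ss) ->
  all (fun v => all (fun w => adj v w ==> (lam w v == hat (lam v w))) vs) vs ->
  all (fun v => has (perm_eq [seq lam v w | w <- vs & adj v w]) ss) vs ->
  T1_eq adj 3.
Proof.
rewrite {}/vs grid_verticesE => size_ss uniq_deg hat_closed /assembly_designP.
move=> design /allP tiled.
apply: (T1_eq_of_design (vs := grid_witnesses m n) size_ss erefl _ hat_closed
         design).
  by under eq_map do rewrite card_count.
by move=> v; apply: tiled (mem_enum _ v).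
Qed.

Definition tiles_3x3 : seq (seq cet) :=
  [:: [:: bond; bond]; [:: bond; hat bond; hat bond]; nseq 4 (hat bond)].

Definition tiles_3x5_4x4 : seq (seq cet) :=
  [:: [:: bond; bond]; [:: bond; hat bond; hat bond];
      [:: bond; bond; hat bond; hat bond]].

Definition arcs_3x3 : seq ((nat * nat) * (nat * nat)) :=
  [:: ((0, 0), (0, 1)); ((0, 0), (1, 0)); ((0, 1), (1, 1)); ((0, 2), (0, 1));
      ((0, 2), (1, 2)); ((1, 0), (1, 1)); ((1, 2), (1, 1)); ((2, 0), (1, 0));
      ((2, 0), (2, 1)); ((2, 1), (1, 1)); ((2, 2), (1, 2)); ((2, 2), (2, 1))].

Definition arcs_3x5 : seq ((nat * nat) * (nat * nat)) :=
  [:: ((0, 0), (0, 1)); ((0, 0), (1, 0)); ((0, 1), (1, 1)); ((0, 2), (0, 1));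
      ((0, 3), (0, 2)); ((0, 4), (0, 3)); ((0, 4), (1, 4)); ((1, 0), (1, 1));
      ((1, 1), (1, 2)); ((1, 1), (2, 1)); ((1, 2), (0, 2)); ((1, 2), (2, 2));
      ((1, 3), (0, 3)); ((1, 3), (1, 2)); ((1, 4), (1, 3)); ((2, 0), (1, 0));
      ((2, 0), (2, 1)); ((2, 1), (2, 2)); ((2, 2), (2, 3)); ((2, 3), (1, 3));
      ((2, 4), (1, 4)); ((2, 4), (2, 3))].

Definition arcs_4x4 : seq ((nat * nat) * (nat * nat)) :=
  [:: ((0, 0), (0, 1)); ((0, 0), (1, 0)); ((0, 1), (1, 1)); ((0, 2), (0, 1));
      ((0, 3), (0, 2)); ((0, 3), (1, 3)); ((1, 0), (2, 0)); ((1, 1), (1, 0));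
      ((1, 1), (2, 1)); ((1, 2), (0, 2)); ((1, 2), (1, 1)); ((1, 3), (1, 2));
      ((2, 0), (2, 1)); ((2, 1), (2, 2)); ((2, 1), (3, 1)); ((2, 2), (1, 2));
      ((2, 2), (2, 3)); ((2, 3), (1, 3)); ((3, 0), (2, 0)); ((3, 0), (3, 1));
      ((3, 1), (3, 2)); ((3, 2), (2, 2)); ((3, 3), (2, 3)); ((3, 3), (3, 2))].

Theorem proposition6 (m n : nat) :
  (m, n) \in [:: (3, 3); (3, 5); (4, 4)] ->
  T1_eq (grid_adj m n) 3.
Proof.
rewrite !inE => /or3P [] /eqP [-> ->].
- by apply: (grid_T1_eq3 (arcs := arcs_3x3) (ss := tiles_3x3)); vm_compute.
- by apply: (grid_T1_eq3 (arcs := arcs_3x5) (ss := tiles_3x5_4x4)); vm_compute.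
- by apply: (grid_T1_eq3 (arcs := arcs_4x4) (ss := tiles_3x5_4x4)); vm_compute.
Qed.
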